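(* Consider the contextual auction problem and the exponential-weights algorithm with the OptSq loss estimator described in the context, with a finite predictor class $\mathcal{F}$ satisfying realizability with perfect predictor $f^*$. Then $Z_T\le\log|\mathcal{F}|$, where $Z_T=-\mathbb{E}\big[\log\mathbb{E}_{f\sim q_1}\exp\big(-\eta\sum_{t=1}^T(\hat\ell_{t,f}-\hat\ell_{t,f^*})\big)\big]$, and, with an optimal choice of $\eta\le1$, the algorithm guarantees $\mathbb{E}[\mathrm{Reg}]=O\big(\log|\mathcal{F}|+\sqrt{\sum_{t=1}^TN_t\log|\mathcal{F}|}\big)$.
   Context: Notation: $\mathrm{smax}_iv_i$ is the second-largest entry of $v$; $\arg\max$, $\arg\mathrm{smax}$ are the indices of the largest and second-largest entries, ties broken by a fixed deterministic rule. Problem: $T$ rounds. At each round $t$: the learner observes a context $x_t\in\mathcal{X}$ and $N_t$ bidders ($N=\max_tN_t$); chooses estimated CTRs $\tilde\rho_t\in[0,1]^{N_t}$; simultaneously bidders choose bids $b_{t,i}\in[0,1]$ (possibly adaptively adversarial, without knowing $\tilde\rho_t$). Winner $i_t=\arg\max_ib_{t,i}\tilde\rho_{t,i}$, runner-up $j_t=\arg\mathrm{smax}_ib_{t,i}\tilde\rho_{t,i}$, payment per click $d_t=b_{t,j_t}\tilde\rho_{t,j_t}/\tilde\rho_{t,i_t}$; ad $i_t$ is clicked with probability $\rho_{t,i_t}$ (true CTR). The learner observes $b_t$ and click indicator $c_t\in\{0,1\}$ and receives $c_td_t$. Regret: $\mathrm{Reg}=\sum_t\mathrm{smax}_{i\in[N_t]}b_{t,i}\rho_{t,i}-\sum_tc_td_t$.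 Realizability: $\mathcal{F}\ni f^*$ with $f^*(x_t,i)=\rho_{t,i}$ for all $t,i$, where $\mathcal{F}$ consists of functions $\mathcal{X}\times[N]\to[0,1]$. Algorithm: with learning rate $\eta>0$, sample $f_t\sim q_t$, $q_{t,f}\propto\exp(-\eta\sum_{s<t}\hat\ell_{s,f})$ ($q_1$ uniform on $\mathcal{F}$), set $\tilde\rho_{t,i}=f_t(x_t,i)$, run the auction, and define $\hat\ell_{t,f}=\frac{1}{4\eta}(f(x_t,i_t)-c_t)^2-\mathrm{smax}_{j\in[N_t]}b_{t,j}f(x_t,j)$ for each $f\in\mathcal{F}$. *)

From mathcomp Require Import all_boot all_order all_algebra.
From mathcomp Require Import reals.
From mathcomp Require Import sequences exp.
Set Implicit Arguments. Unset Strict Implicit. Unset Printing Implicit Defensive.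
Import Order.TTheory GRing.Theory Num.Theory.
Local Open Scope ring_scope.

Section Auction.
Variable R : realType.

(* index of the largest entry of v among the indices in s; ties broken
   deterministically in favour of the earliest index in s *)
Definition argmax_in (s : seq nat) (v : nat -> R) : nat :=
  match s with
  | [::] => 0%N
  | i :: s' => foldl (fun b j => if v b < v j then j else b) i s'
  end.

Definition winner (n : nat) (v : nat -> R) : nat := argmax_in (iota 0 n) v.
Definition runner (n : nat) (v : nat -> R) : nat :=
  argmax_in [seq j <- iota 0 n | j != winner n v] v.
Definition smax (n : nat) (v : nat -> R) : R := v (runner n v).

Section Game.
(* X : context space; I indexes the finite class F (injective family);
   istar indexes the perfect predictor f^*; Nt t : number of bidders at
   round t (rounds are t = 0, ..., T-1); eta : learning rate;
   advx / advb : adaptive adversary choosing the context and the bids of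
   round t as a function of the history of past (sampled predictor, click)
   pairs. *)
Variables (X : Type) (I : finType) (F : I -> X -> nat -> R) (istar : I)
  (Nt : nat -> nat) (eta : R)
  (advx : nat -> seq (I * bool) -> X)
  (advb : nat -> seq (I * bool) -> nat -> R).

Definition hist := seq (I * bool).
Definition dflt : I * bool := (istar, false).

Definition scores (t : nat) (h : hist) (g : I) : nat -> R :=
  fun j => advb t h j * F g (advx t h) j.

Definition win (t : nat) (h : hist) (f : I) : nat := winner (Nt t) (scores t h f).
Definition run (t : nat) (h : hist) (f : I) : nat := runner (Nt t) (scores t h f).

(* OptSq loss estimate hat l_{t,g}, round t, history h, (f_t, c_t) = fc *)
Definition lhat (t : nat) (h : hist) (fc : I * bool) (g : I) : R :=
  (4 * eta)^-1 * (F g (advx t h) (win t h fc.1) - (fc.2)%:R) ^+ 2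
  - smax (Nt t) (scores t h g).

Definition cumloss (h : hist) (g : I) : R :=
  \sum_(s < size h) lhat s (take s h) (nth dflt h s) g.

Definition q (h : hist) (g : I) : R :=
  expR (- eta * cumloss h g) / \sum_(g' : I) expR (- eta * cumloss h g').

Definition rho (t : nat) (h : hist) (j : nat) : R := F istar (advx t h) j.

Definition click_prob (t : nat) (h : hist) (fc : I * bool) : R :=
  let p := rho t h (win t h fc.1) in if fc.2 then p else 1 - p.

Definition traj_prob (T : nat) (h : T.-tuple (I * bool)) : R :=
  \prod_(t < T) (q (take t h) (nth dflt h t).1
                 * click_prob t (take t h) (nth dflt h t)).

Definition expect (T : nat) (Y : hist -> R) : R :=
  \sum_(h : T.-tuple (I * bool)) traj_prob h * Y h.

Definition pay (t : nat) (h : hist) (f : I) : R :=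
  advb t h (run t h f) * F f (advx t h) (run t h f)
  / F f (advx t h) (win t h f).

Definition regret (T : nat) (h : hist) : R :=
  \sum_(t < T) (smax (Nt t) (fun j => advb t (take t h) j * rho t (take t h) j)
               - ((nth dflt h t).2)%:R * pay t (take t h) (nth dflt h t).1).

Definition expected_regret (T : nat) : R := expect T (regret T).

Definition Z (T : nat) : R :=
  - expect T (fun h => ln (#|I|%:R^-1 *
      \sum_(g : I) expR (- eta * (cumloss h g - cumloss h istar)))).

End Game.
End Auction.

From Pilot Require Import Defs.
From mathcomp Require Import all_boot all_order all_algebra.
From mathcomp Require Import reals.
From mathcomp Require Import sequences exp.
From mathcomp Require Import lra ring.
Import Order.TTheory GRing.Theory Num.Theory.
Local Open Scope ring_scope.
Set Implicit Arguments. Unset Strict Implicit. Unset Printing Implicit Defensive.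

(* Let [u_g] be the gap between the second-highest scores under [f^*] and under
   [g], and [d_g] the CTR error of [g] on the slot that wins under [g]. Since the
   second-price rule loses at most [|d_f|] per click, the expected regret of a round
   is at most [E_{f ~ q} (u_f + |d_f|)]. The OptSq estimate makes
   [-eta (lhat_g - lhat_{f^*})] equal to [-eta u_g] plus a quarter of the squared-loss
   advantage of [f^*] over [g] on the observed click, whose exponential moment is at
   most [1 - d^2/8]; so the ratio of successive exponential-weights potentials has
   expectation at most [1 - eta E u + eta^2 - E d^2 / 16]. With [ln y <= y - 1], and
   AM-GM weighted by the probability that a slot wins (the [q]-weighted reciprocals of
   these probabilities sum to at most [N_t]), every round satisfies
   [E reg + (ln ratio) / eta <= 5 eta N_t]. The logarithms telescope to [-Z_T], and
   [Z_T <= ln |F|] because the potential contains the term of [f^*]. Hence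
   [E Reg <= ln |F| / eta + 5 eta sum_t N_t], which
   [eta = min (1/3, sqrt (ln |F| / sum_t N_t))] balances; for [|F| = 1] the per-round
   bound is already [<= 0]. *)

Section Argmax.
Variable R : realType.
Implicit Types (v : nat -> R) (s : seq nat).

Lemma foldl_argmaxP v s i :
  let m := foldl (fun b j => if v b < v j then j else b) i s in
  m \in i :: s /\ {in i :: s, forall j, v j <= v m}.
Proof.
elim: s i => [|k s IH] i /=.
  by split=> [|j]; rewrite ?mem_head // inE => /eqP ->.
set i' := if v i < v k then k else i.
have [m_in m_max] := IH i'.
have i'_max : v i <= v i' /\ v k <= v i'.
  by rewrite /i'; case: ltP => [/ltW|] //; split.
split.
  by move: m_in; rewrite /i' !inE; case: ifP => _ /orP[] ->; rewrite ?orbT.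
move=> j; rewrite !inE => /or3P[/eqP->|/eqP->|js].
- exact: le_trans i'_max.1 (m_max _ (mem_head _ _)).
- exact: le_trans i'_max.2 (m_max _ (mem_head _ _)).
- by apply: m_max; rewrite inE js orbT.
Qed.

Lemma argmax_in_mem v s : s != [::] -> argmax_in s v \in s.
Proof. by case: s => // i s _; have [] := foldl_argmaxP v s i. Qed.

Lemma argmax_in_max v s : {in s, forall j, v j <= v (argmax_in s v)}.
Proof. by case: s => // i s; have [] := foldl_argmaxP v s i. Qed.

Lemma winner_lt n v : (0 < n)%N -> (winner n v < n)%N.
Proof.
case: n => // n _; have := @argmax_in_mem v (iota 0 n.+1).
by rewrite /winner mem_iota; apply.
Qed.

Lemma winner_max n v j : (j < n)%N -> v j <= v (winner n v).
Proof. by move=> jn; apply: argmax_in_max; rewrite mem_iota. Qed.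

Lemma runner_lt n v : (2 <= n)%N -> (runner n v < n)%N.
Proof.
move=> n2; set s := [seq j <- iota 0 n | j != winner n v].
have [j js] : exists j, j \in s.
  exists (if winner n v == 0%N then 1%N else 0%N).
  rewrite mem_filter mem_iota add0n /=.
  by case: (winner n v =P 0%N) => [->|/eqP w0] //=; rewrite eq_sym w0 ltnW.
have /(argmax_in_mem v) : s != [::] by apply: contraTneq js => ->.
by rewrite mem_filter mem_iota add0n => /andP[_ /andP[]].
Qed.

Lemma smax_le_winner n v : (2 <= n)%N -> smax n v <= v (winner n v).
Proof. by move=> n2; apply/winner_max/runner_lt. Qed.

End Argmax.

Section RealInequalities.
Variable R : realType.
Implicit Types x y z D : R.

Lemma expR_mul1B_le1 x : (1 - x) * expR x <= 1.
Proof.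
have := ler_wpM2r (expR_ge0 x) (expR_ge1Dx (- x)).
by rewrite -expRD addNr expR0.
Qed.

Lemma expR_le1DxDsqr y : y <= 3^-1 -> expR y <= 1 + y + y ^+ 2.
Proof.
have [z ->] : exists z, y = z + z by exists (y / 2); rewrite -splitr.
move=> hz; set a := (1 - z) * expR z.
have a_ge0 : 0 <= a by rewrite mulr_ge0 ?expR_ge0 //; lra.
have ey : expR (z + z) * (1 - z) ^+ 2 = a ^+ 2 by rewrite expRD /a; ring.
(* [1 <= (1 - z)^2 (1 + 2z + 4z^2)] is [0 <= z^2 (1 - 6z + 4z^2)], true for [z <= 1/6] *)
have poly : 1 <= (1 + (z + z) + (z + z) ^+ 2) * (1 - z) ^+ 2.
  have : 0 <= z ^+ 2 * (1 - 6 * z + 4 * z ^+ 2).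
    by rewrite mulr_ge0 ?sqr_ge0 //; have := sqr_ge0 z; lra.
  suff -> : (1 + (z + z) + (z + z) ^+ 2) * (1 - z) ^+ 2
            = 1 + z ^+ 2 * (1 - 6 * z + 4 * z ^+ 2) by lra.
  by ring.
rewrite -(@ler_pM2r _ ((1 - z) ^+ 2)); last by rewrite exprn_gt0 //; lra.
by rewrite ey (le_trans _ poly) // expr_le1 // expR_mul1B_le1.
Qed.

Lemma expRN_mul_le x D : `|x| <= 3^-1 -> 0 <= D ->
  expR (- x) * (1 - D / 8) <= 1 - x + x ^+ 2 - D / 16.
Proof.
rewrite ler_norml => /andP[x_ge x_le] D_ge0.
have up : expR (- x) <= 1 - x + x ^+ 2.
  by rewrite -[x ^+ 2]sqrrN; apply: expR_le1DxDsqr; lra.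
have low := ler_wpM2r D_ge0 (expR_ge1Dx (- x)).
have : 0 <= (3^-1 - x) * D by rewrite mulr_ge0 //; lra.
lra.
Qed.

Lemma ler_norm_amgm x c : 0 < c -> `|x| <= c * x ^+ 2 + (4 * c)^-1.
Proof.
move=> c_gt0; rewrite -subr_ge0 -(real_normK (num_real x)).
have -> : c * `|x| ^+ 2 + (4 * c)^-1 - `|x| = (2 * c * `|x| - 1) ^+ 2 / (4 * c).
  by field; rewrite gt_eqF.
by rewrite divr_ge0 ?sqr_ge0 // ltW // mulr_gt0.
Qed.

End RealInequalities.

Section AuctionInequalities.
Variable R : realType.
Implicit Types a r c s : R.

Definition sqloss_edge a r c := ((r - c) ^+ 2 - (a - c) ^+ 2) / 4.

Lemma sqloss_edge_le a r c : 0 <= r <= 1 -> 0 <= c <= 1 -> sqloss_edge a r c <= 4^-1.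
Proof.
move=> /andP[r0 r1] /andP[c0 c1]; rewrite /sqloss_edge.
have : (r - c) ^+ 2 <= 1 by rewrite -real_normK ?num_real // expr_le1 // ler_norml; lra.
have := sqr_ge0 (a - c); lra.
Qed.

Lemma bernoulli_expR_sqloss_edge_le a r : 0 <= a <= 1 -> 0 <= r <= 1 ->
  r * expR (sqloss_edge a r 1) + (1 - r) * expR (sqloss_edge a r 0)
    <= 1 - (a - r) ^+ 2 / 8.
Proof.
move=> /andP[a0 a1] r01; have /andP[r0 r1] := r01.
have quad c : 0 <= c <= 1 -> expR (sqloss_edge a r c)
    <= 1 + sqloss_edge a r c + sqloss_edge a r c ^+ 2.
  by move=> c01; apply: expR_le1DxDsqr; have := sqloss_edge_le a r01 c01; lra.
apply: le_trans (_ : r * (1 + sqloss_edge a r 1 + sqloss_edge a r 1 ^+ 2)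
  + (1 - r) * (1 + sqloss_edge a r 0 + sqloss_edge a r 0 ^+ 2) <= _).
  by apply: lerD; apply: ler_wpM2l; rewrite ?quad //; lra.
set D := (a - r) ^+ 2.
have -> : r * (1 + sqloss_edge a r 1 + sqloss_edge a r 1 ^+ 2)
  + (1 - r) * (1 + sqloss_edge a r 0 + sqloss_edge a r 0 ^+ 2)
  = 1 - D / 4 + D * (D + 4 * (r * (1 - r))) / 16 by rewrite /D /sqloss_edge; field.
have D_le1 : D <= 1 by rewrite /D -real_normK ?num_real // expr_le1 // ler_norml; lra.
have var_le : 4 * (r * (1 - r)) <= 1 by have := sqr_ge0 (2 * r - 1); lra.
have D_ge0 : 0 <= D := sqr_ge0 _.
have : D * (D + 4 * (r * (1 - r))) <= D * 2 by rewrite ler_wpM2l //; lra.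
lra.
Qed.

Lemma second_price_gap_le s a r : 0 <= s <= a -> s - r * (s / a) <= `|a - r|.
Proof.
move=> /andP[s0 sa]; have [a0|a_neq0] := eqVneq a 0.
  have -> : s = 0 by apply/le_anti/andP; rewrite s0 -a0.
  by rewrite mul0r mulr0 subr0 normr_ge0.
have a_pos : 0 < a by rewrite lt_def a_neq0 (le_trans s0 sa).
have -> : s - r * (s / a) = s / a * (a - r) by field.
rewrite -[X in _ <= X]mul1r (le_trans (ler_norm _)) // normrM ler_wpM2r //.
by rewrite ger0_norm ?divr_ge0 ?ler_pdivrMr ?mul1r // ltW.
Qed.

End AuctionInequalities.

Lemma take_rcons_le (A : Type) (s : seq A) x n :
  (n <= size s)%N -> take n (rcons s x) = take n s.
Proof. by move=> ns; rewrite -cats1 takel_cat. Qed.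

Lemma big_prefix_rcons (V : Type) (idx : V) (op : Monoid.law idx) (A : Type) (d : A)
    (G : nat -> seq A -> A -> V) (h : seq A) x n : size h = n ->
  \big[op/idx]_(t < n.+1) G t (take t (rcons h x)) (nth d (rcons h x) t)
  = op (\big[op/idx]_(t < n) G t (take t h) (nth d h t)) (G n h x).
Proof.
move=> <-; rewrite big_ord_recr /= take_rcons_le // take_size nth_rcons ltnn eqxx.
congr (op _ _); apply: eq_bigr => t _.
by rewrite take_rcons_le ?nth_rcons ?ltn_ord // ltnW.
Qed.

Lemma big_tuple_rcons (V : nmodType) (A : finType) n (G : n.+1.-tuple A -> V) :
  \sum_(h : n.+1.-tuple A) G h = \sum_(h : n.-tuple A) \sum_(x : A) G [tuple of rcons h x].
Proof.
rewrite pair_bigA /= (reindex (fun p : n.-tuple A * A => [tuple of rcons p.1 p.2])) //.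
exists (fun h => (belast_tuple (thead h) (behead_tuple h), last (thead h) (behead h))).
  move=> [s x] _ /=; set h := [tuple of rcons s x].
  have /rcons_inj[s_eq ->] : rcons (belast (thead h) (behead h)) (last (thead h) (behead h))
      = rcons s x by rewrite -lastI; have /(congr1 val) /= <- := tuple_eta h.
  by congr pair; apply: val_inj.
by move=> h _; apply: val_inj; rewrite /= -lastI; have /(congr1 val) /= <- := tuple_eta h.
Qed.

(* One round in the abstract: [q] are the current weights, [w f] is the winning slot
   when the auction is run with predictor [f], [A g] and [r] are the predicted and true
   CTRs, and [u g] is the score gap of [g] to [f^*]. *)
Section RoundCore.
Variables (R : realType) (I : finType) (q : I -> R) (N : nat) (w : I -> nat)
  (A : I -> nat -> R) (r : nat -> R) (u : I -> R) (eta : R).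
Hypotheses (q_gt0 : forall g, 0 < q g) (q_sum1 : \sum_g q g = 1)
  (w_lt : forall g, (w g < N)%N) (A01 : forall g j, 0 <= A g j <= 1)
  (r01 : forall j, 0 <= r j <= 1) (u_le1 : forall g, `|u g| <= 1)
  (eta_gt0 : 0 < eta) (eta_le : eta <= 3^-1).

Definition ctr_err g j := A g j - r j.

Definition edge_mgf g j :=
  r j * expR (sqloss_edge (A g j) (r j) 1)
  + (1 - r j) * expR (sqloss_edge (A g j) (r j) 0).

Definition sq_err g := \sum_f q f * ctr_err g (w f) ^+ 2.

Definition win_prob g := \sum_f q f * (w f == w g)%:R.

Lemma sq_err_ge0 g : 0 <= sq_err g.
Proof. by apply: sumr_ge0 => f _; rewrite mulr_ge0 ?sqr_ge0 // ltW. Qed.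

Lemma edge_mgf_mix_le g :
  \sum_f q f * edge_mgf g (w f) <= 1 - sq_err g / 8.
Proof.
apply: le_trans (_ : \sum_f q f * (1 - ctr_err g (w f) ^+ 2 / 8) <= _).
  apply: ler_sum => f _; apply: ler_wpM2l; first exact: ltW.
  exact: bernoulli_expR_sqloss_edge_le.
under eq_bigr => f _ do rewrite mulrBr mulr1 mulrA.
by rewrite sumrB q_sum1 -mulr_suml.
Qed.

Lemma expected_weight_update_le :
  \sum_f q f * (\sum_g q g * expR (- (eta * u g)) * edge_mgf g (w f))
  <= 1 - eta * (\sum_g q g * u g) + eta ^+ 2 - (\sum_g q g * sq_err g) / 16.
Proof.
have -> : \sum_f q f * (\sum_g q g * expR (- (eta * u g)) * edge_mgf g (w f))
    = \sum_g q g * (expR (- (eta * u g)) * \sum_f q f * edge_mgf g (w f)).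
  under eq_bigr => f _ do rewrite mulr_sumr.
  rewrite exchange_big; apply: eq_bigr => g _; rewrite !mulr_sumr.
  by apply: eq_bigr => f _; ring.
apply: le_trans (_ : \sum_g q g * (1 - eta * u g + eta ^+ 2 - sq_err g / 16) <= _).
  apply: ler_sum => g _; apply: ler_wpM2l; first exact: ltW.
  have eta_u : `|eta * u g| <= 3^-1.
    rewrite normrM gtr0_norm //; apply: le_trans eta_le.
    exact: ler_piMr (ltW eta_gt0) (u_le1 g).
  apply: le_trans (_ : _ <= expR (- (eta * u g)) * (1 - sq_err g / 8)) _.
    by apply: ler_wpM2l; [exact: expR_ge0 | exact: edge_mgf_mix_le].
  apply: le_trans (expRN_mul_le eta_u (sq_err_ge0 g)) _.
  rewrite lerD2r lerD2l exprMn -[X in _ <= X]mulr1 ler_wpM2l ?sqr_ge0 //.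
  by rewrite -real_normK ?num_real // expr_le1.
rewrite le_eqVlt; apply/predU1l.
have expand g : q g * (1 - eta * u g + eta ^+ 2 - sq_err g / 16)
    = q g - eta * (q g * u g) + eta ^+ 2 * q g - 16^-1 * (q g * sq_err g) by ring.
under eq_bigr => g _ do rewrite expand.
by rewrite !(sumrB, big_split) /= -!mulr_sumr q_sum1; ring.
Qed.

Lemma win_prob_ge g : q g <= win_prob g.
Proof.
rewrite /win_prob (bigD1 g) //= eqxx mulr1 lerDl.
by apply: sumr_ge0 => f _; rewrite mulr_ge0 ?ler0n ?ltW.
Qed.

Lemma win_prob_sq_err_le g : win_prob g * ctr_err g (w g) ^+ 2 <= sq_err g.
Proof.
rewrite /win_prob /sq_err mulr_suml; apply: ler_sum => f _.
by case: eqP => [->|_]; rewrite ?mulr1 // mulr0 mul0r mulr_ge0 ?sqr_ge0 ?ltW.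
Qed.

(* The slots partition [I]: summing [q g / win_prob g] over one slot gives at most 1. *)
Lemma sum_div_win_prob_le : \sum_g q g / win_prob g <= N%:R.
Proof.
pose p (j : nat) := \sum_f q f * (w f == j)%:R.
have split_slot g : q g / win_prob g = \sum_(j < N) (w g == j)%:R * (q g / p j).
  rewrite (bigD1 (Ordinal (w_lt g))) //= eqxx mul1r big1 ?addr0 // => j.
  by rewrite -val_eqE /= eq_sym => /negPf ->; rewrite mul0r.
under eq_bigr => g _ do rewrite split_slot.
rewrite exchange_big /=.
apply: le_trans (_ : _ <= \sum_(j < N) (1 : R)) _; last by rewrite sumr_const card_ord.
apply: ler_sum => j _.
have -> : \sum_g (w g == j)%:R * (q g / p j) = p j / p j.
  by rewrite mulr_suml; apply: eq_bigr => g _; ring.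
by have [->|p_neq0] := eqVneq (p j) 0; rewrite ?mul0r ?divff.
Qed.

Lemma ctr_err_le :
  \sum_g q g * `|ctr_err g (w g)|
    <= (16 * eta)^-1 * \sum_g q g * sq_err g + 4 * eta * N%:R.
Proof.
set k := (16 * eta)^-1; have k_gt0 : 0 < k by rewrite invr_gt0 mulr_gt0.
apply: le_trans (_ : \sum_g (k * (q g * sq_err g) + 4 * eta * (q g / win_prob g)) <= _).
  apply: ler_sum => g _.
  have p_gt0 : 0 < win_prob g := lt_le_trans (q_gt0 g) (win_prob_ge g).
  rewrite (le_trans (ler_wpM2l (ltW (q_gt0 g)) (ler_norm_amgm _ (mulr_gt0 k_gt0 p_gt0)))) //.
  rewrite mulrDr; apply: lerD.
    rewrite [X in X <= _](_ : _ = k * (q g * (win_prob g * ctr_err g (w g) ^+ 2))).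
      by rewrite !ler_pM2l // win_prob_sq_err_le.
    by ring.
  by rewrite le_eqVlt /k; apply/predU1l; field; rewrite !gt_eqF.
rewrite big_split /= -!mulr_sumr lerD2l ler_pM2l ?sum_div_win_prob_le //.
by rewrite mulr_gt0.
Qed.

Lemma round_core : (0 < N)%N ->
  \sum_g q g * (u g + `|ctr_err g (w g)|)
  - eta^-1 * (1 - \sum_f q f * (\sum_g q g * expR (- (eta * u g)) * edge_mgf g (w f)))
  <= 5 * eta * N%:R.
Proof.
move=> N_gt0.
have upd := expected_weight_update_le; have err := ctr_err_le.
set L := \sum_f _ in upd *.
under eq_bigr => g _ do rewrite mulrDr.
rewrite big_split /=.
set Su := \sum_g q g * u g in upd *.
set Sd := \sum_g q g * `|_| in err *.
set SD := \sum_g q g * sq_err g in upd err *.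
have pot : Su - eta + (16 * eta)^-1 * SD <= eta^-1 * (1 - L).
  have -> : Su - eta + (16 * eta)^-1 * SD = eta^-1 * (eta * Su - eta ^+ 2 + SD / 16).
    by field; rewrite gt_eqF.
  by rewrite ler_pM2l ?invr_gt0 //; lra.
have : eta <= eta * N%:R by apply: ler_peMr; rewrite ?ler1n // ltW.
lra.
Qed.

End RoundCore.

Section Game.
Variables (R : realType) (X : Type) (I : finType) (F : I -> X -> nat -> R)
  (istar : I) (Nt : nat -> nat) (eta : R)
  (advx : nat -> seq (I * bool) -> X)
  (advb : nat -> seq (I * bool) -> nat -> R).
Hypothesis F01 : forall i x j, 0 <= F i x j <= 1.

Local Notation q := (Defs.q F istar Nt eta advx advb).
Local Notation click_prob := (Defs.click_prob F istar Nt advx advb).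
Local Notation traj_prob := (Defs.traj_prob F istar Nt eta advx advb).
Local Notation expect := (Defs.expect F istar Nt eta advx advb).
Local Notation rho := (Defs.rho F istar advx).
Local Notation win := (Defs.win F Nt advx advb).
Local Notation dflt := (Defs.dflt istar).
Local Notation lhat := (Defs.lhat F Nt eta advx advb).
Local Notation cumloss := (Defs.cumloss F istar Nt eta advx advb).

Lemma sum_expR_gt0 (f : I -> R) : 0 < \sum_g expR (f g).
Proof.
rewrite (bigD1 istar) //= ltr_wpDr ?expR_gt0 //.
by apply: sumr_ge0 => g _; apply: expR_ge0.
Qed.

Lemma q_gt0 h g : 0 < q h g.
Proof. by rewrite divr_gt0 ?expR_gt0 ?sum_expR_gt0. Qed.

Lemma q_sum1 h : \sum_g q h g = 1.
Proof. by rewrite -mulr_suml mulfV // gt_eqF // sum_expR_gt0. Qed.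

Lemma click_prob_ge0 t h fc : 0 <= click_prob t h fc.
Proof.
have /andP[r0 r1] := F01 istar (advx t h) (win t h fc.1).
by rewrite /click_prob /rho; case: fc.2; lra.
Qed.

Definition round_expect t h (G : I * bool -> R) :=
  \sum_(fc : I * bool) q h fc.1 * click_prob t h fc * G fc.

Lemma round_expectE t h G : round_expect t h G =
  \sum_f q h f * (rho t h (win t h f) * G (f, true)
                  + (1 - rho t h (win t h f)) * G (f, false)).
Proof.
rewrite /round_expect (_ : \sum_(fc : I * bool) _
  = \sum_f \sum_(c : bool) q h f * click_prob t h (f, c) * G (f, c)).
  by apply: eq_bigr => f _; rewrite big_bool [RHS]mulrDr !mulrA.
by rewrite pair_bigA; apply: eq_bigr => -[].
Qed.

Lemma round_expect_cst t h c : round_expect t h (fun _ => c) = c.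
Proof.
rewrite round_expectE.
under eq_bigr => f _ do rewrite -mulrDl subrKC mul1r.
by rewrite -mulr_suml q_sum1 mul1r.
Qed.

Lemma ler_round_expect t h G1 G2 : (forall fc, G1 fc <= G2 fc) ->
  round_expect t h G1 <= round_expect t h G2.
Proof.
move=> G12; apply: ler_sum => fc _; apply: ler_wpM2l => //.
by rewrite mulr_ge0 ?click_prob_ge0 // ltW ?q_gt0.
Qed.

Lemma eq_round_expect t h G1 G2 : G1 =1 G2 -> round_expect t h G1 = round_expect t h G2.
Proof. by move=> G12; apply: eq_bigr => fc _; rewrite G12. Qed.

Lemma round_expectD t h G1 G2 :
  round_expect t h (fun fc => G1 fc + G2 fc) = round_expect t h G1 + round_expect t h G2.
Proof. by rewrite /round_expect -big_split; apply: eq_bigr => fc _; rewrite mulrDr. Qed.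

Lemma round_expectZ t h c G :
  round_expect t h (fun fc => c * G fc) = c * round_expect t h G.
Proof. by rewrite /round_expect mulr_sumr; apply: eq_bigr => fc _; rewrite mulrCA. Qed.

Lemma traj_prob_ge0 T (h : T.-tuple (I * bool)) : 0 <= traj_prob h.
Proof.
apply: prodr_ge0 => t _.
by rewrite mulr_ge0 ?click_prob_ge0 // ltW ?q_gt0.
Qed.

Lemma traj_prob_rcons T (h : T.-tuple (I * bool)) fc :
  traj_prob [tuple of rcons h fc] = traj_prob h * (q h fc.1 * click_prob T h fc).
Proof.
pose G t h fc := q h fc.1 * click_prob t h fc.
exact: (big_prefix_rcons *%R dflt G fc (size_tuple h)).
Qed.

Lemma expect_nil Y : expect 0 Y = Y [::].
Proof.
rewrite /Defs.expect (big_pred1 [tuple]) => [|h]; last by apply/esym/eqP/tuple0.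
by rewrite /Defs.traj_prob big_ord0 mul1r.
Qed.

Lemma expect_rcons T Y :
  expect T.+1 Y = expect T (fun h => round_expect T h (fun fc => Y (rcons h fc))).
Proof.
rewrite /Defs.expect big_tuple_rcons; apply: eq_bigr => h _.
by rewrite /round_expect mulr_sumr; apply: eq_bigr => fc _; rewrite traj_prob_rcons !mulrA.
Qed.

Lemma ler_expect T (Y1 Y2 : hist I -> R) :
  (forall h : T.-tuple (I * bool), Y1 h <= Y2 h) -> expect T Y1 <= expect T Y2.
Proof. by move=> Y12; apply: ler_sum => h _; rewrite ler_wpM2l ?traj_prob_ge0. Qed.

Lemma eq_expect T (Y1 Y2 : hist I -> R) :
  (forall h : T.-tuple (I * bool), Y1 h = Y2 h) -> expect T Y1 = expect T Y2.
Proof. by move=> Y12; apply: eq_bigr => h _; rewrite Y12. Qed.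

Lemma expectD T (Y1 Y2 : hist I -> R) :
  expect T (fun h => Y1 h + Y2 h) = expect T Y1 + expect T Y2.
Proof. by rewrite /Defs.expect -big_split; apply: eq_bigr => h _; rewrite mulrDr. Qed.

Lemma expectZ T c (Y : hist I -> R) : expect T (fun h => c * Y h) = c * expect T Y.
Proof. by rewrite /Defs.expect mulr_sumr; apply: eq_bigr => h _; rewrite mulrCA. Qed.

Lemma expect_cst T c : expect T (fun _ => c) = c.
Proof.
elim: T => [|T IH]; first by rewrite expect_nil.
by rewrite expect_rcons -[RHS]IH; apply: eq_expect => h; rewrite round_expect_cst.
Qed.

Lemma expect_sum_rounds_le T (G : nat -> hist I -> I * bool -> R) (B : nat -> R) :
  (forall t h, (t < T)%N -> round_expect t h (G t h) <= B t) ->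
  expect T (fun h => \sum_(t < T) G t (take t h) (nth dflt h t)) <= \sum_(t < T) B t.
Proof.
elim: T => [|T IH] GB; first by rewrite expect_nil !big_ord0.
rewrite expect_rcons big_ord_recr /=.
apply: le_trans
  (_ : expect T (fun h => \sum_(t < T) G t (take t h) (nth dflt h t) + B T) <= _).
  apply: ler_expect => h; rewrite (eq_round_expect _ _
    (fun fc => big_prefix_rcons +%R dflt G fc (size_tuple h))).
  by rewrite round_expectD round_expect_cst lerD2l GB.
by rewrite expectD expect_cst lerD2r IH // => t h /ltnW; apply: GB.
Qed.

Definition round_regret t h (fc : I * bool) :=
  smax (Nt t) (fun j => advb t h j * rho t h j) - (fc.2)%:R * pay F Nt advx advb t h fc.1.

Definition potential_ratio t h fc :=
  \sum_g q h g * expR (- eta * (lhat t h fc g - lhat t h fc istar)).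

Lemma potential_ratio_gt0 t h fc : 0 < potential_ratio t h fc.
Proof.
rewrite /potential_ratio (bigD1 istar) //=; apply: ltr_pwDl.
  exact: mulr_gt0 (q_gt0 _ _) (expR_gt0 _).
by apply: sumr_ge0 => g _; rewrite mulr_ge0 ?expR_ge0 // ltW ?q_gt0.
Qed.

Section Round.
Variables (t : nat) (h : hist I).
Hypotheses (Nt_ge2 : (2 <= Nt t)%N) (b01 : forall j, (j < Nt t)%N -> 0 <= advb t h j <= 1).

Let x := advx t h.
Let s g := smax (Nt t) (scores F advx advb t h g).
Let A g j := F g x j.
Let r j := F istar x j.
Let u g := s istar - s g.

Lemma win_lt g : (win t h g < Nt t)%N.
Proof. by rewrite winner_lt // (leq_trans _ Nt_ge2). Qed.

Lemma smax_scores_le_win g : 0 <= s g <= A g (win t h g).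
Proof.
have /andP[b0 b1] := b01 (runner_lt (scores F advx advb t h g) Nt_ge2).
have /andP[f0 _] := F01 g x (runner (Nt t) (scores F advx advb t h g)).
rewrite mulr_ge0 //=; apply: le_trans (smax_le_winner _ Nt_ge2) _.
have /andP[bw0 bw1] := b01 (win_lt g).
by rewrite /scores ler_piMl //; have /andP[] := F01 g x (win t h g).
Qed.

Lemma u_le1 g : `|u g| <= 1.
Proof.
have bound g' : 0 <= s g' <= 1.
  have /andP[s0 sA] := smax_scores_le_win g'.
  by rewrite s0 (le_trans sA) //; have /andP[] := F01 g' x (win t h g').
have := bound g; have := bound istar; rewrite ler_norml /u; lra.
Qed.

Lemma round_regret_le :
  round_expect t h (round_regret t h)
    <= \sum_g q h g * (u g + `|ctr_err A r g (win t h g)|).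
Proof.
rewrite round_expectE; apply: ler_sum => f _; apply: ler_wpM2l; first exact/ltW/q_gt0.
change (r (win t h f) * (s istar - 1 * (s f / A f (win t h f)))
  + (1 - r (win t h f)) * (s istar - 0 * (s f / A f (win t h f)))
  <= u f + `|ctr_err A r f (win t h f)|).
have := second_price_gap_le (r (win t h f)) (smax_scores_le_win f).
by rewrite /u /ctr_err; lra.
Qed.

Section Potential.
Hypotheses (eta_gt0 : 0 < eta) (eta_le : eta <= 3^-1).

Lemma lhat_sub_istar f c g :
  - eta * (lhat t h (f, c) g - lhat t h (f, c) istar)
  = - (eta * u g) + sqloss_edge (A g (win t h f)) (r (win t h f)) c%:R.
Proof. by rewrite /Defs.lhat /u /s /sqloss_edge /A /r /x /=; field; rewrite gt_eqF. Qed.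

Lemma round_expect_potential_ratio :
  round_expect t h (potential_ratio t h) =
  \sum_f q h f * (\sum_g q h g * expR (- (eta * u g)) * edge_mgf A r g (win t h f)).
Proof.
rewrite round_expectE; apply: eq_bigr => f _; congr (_ * _).
rewrite /potential_ratio !mulr_sumr -big_split /=; apply: eq_bigr => g _.
by rewrite !lhat_sub_istar !expRD /edge_mgf /rho /r /x /= mulr1n mulr0n; ring.
Qed.

Lemma round_bound :
  round_expect t h (fun fc => round_regret t h fc + eta^-1 * ln (potential_ratio t h fc))
    <= 5 * eta * (Nt t)%:R.
Proof.
have ln_ratio_le : round_expect t h (fun fc => ln (potential_ratio t h fc))
    <= round_expect t h (potential_ratio t h) - 1.
  rewrite -(round_expect_cst t h 1) -mulN1r -round_expectZ -round_expectD.
  apply: ler_round_expect => fc; rewrite mulN1r.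
  have /le_ln1Dx : -1 < potential_ratio t h fc - 1 by have := potential_ratio_gt0 t h fc; lra.
  by rewrite subrKC.
apply: le_trans (round_core (q_gt0 h) (q_sum1 h)
  win_lt (fun g j => F01 g x j) (fun j => F01 istar x j) u_le1 eta_gt0 eta_le
  (ltnW Nt_ge2)).
rewrite round_expectD round_expectZ.
have eta_inv_ge0 : 0 <= eta^-1 by rewrite invr_ge0 ltW.
have := ler_wpM2l eta_inv_ge0 ln_ratio_le.
rewrite round_expect_potential_ratio; have := round_regret_le; lra.
Qed.

End Potential.
End Round.

Definition potential h := \sum_g expR (- eta * (cumloss h g - cumloss h istar)).

Lemma cumloss_rcons h fc g : cumloss (rcons h fc) g = cumloss h g + lhat (size h) h fc g.
Proof.
by rewrite /Defs.cumloss size_rcons (big_prefix_rcons +%R dflt (fun t h fc => lhat t h fc g)).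
Qed.

Lemma potential_ge1 h : 1 <= potential h.
Proof.
rewrite /potential (bigD1 istar) //= subrr mulr0 expR0 lerDl.
by apply: sumr_ge0 => g _; apply: expR_ge0.
Qed.

Lemma potential_mul_q h g :
  potential h * q h g = expR (- eta * (cumloss h g - cumloss h istar)).
Proof.
rewrite /potential /Defs.q; set S := \sum_g' expR (- eta * cumloss h g').
have -> : \sum_g' expR (- eta * (cumloss h g' - cumloss h istar))
    = S * expR (eta * cumloss h istar).
  by rewrite /S mulr_suml; apply: eq_bigr => g' _; rewrite -expRD; congr expR; ring.
have -> : expR (- eta * (cumloss h g - cumloss h istar))
    = expR (eta * cumloss h istar) * expR (- eta * cumloss h g).
  by rewrite -expRD; congr expR; ring.
by field; rewrite gt_eqF ?sum_expR_gt0.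
Qed.

Lemma potential_rcons h fc :
  potential (rcons h fc) = potential h * potential_ratio (size h) h fc.
Proof.
rewrite /potential_ratio mulr_sumr; apply: eq_bigr => g _.
by rewrite mulrA potential_mul_q -expRD !cumloss_rcons; congr expR; ring.
Qed.

Lemma ln_potential h : ln (#|I|%:R^-1 * potential h)
  = \sum_(t < size h) ln (potential_ratio t (take t h) (nth dflt h t)).
Proof.
have card_gt0 : (0 < #|I|)%N by apply/card_gt0P; exists istar.
elim/last_ind: h => [|h fc IH].
  rewrite big_ord0 /potential (eq_bigr (fun=> 1)) => [|g _]; last first.
    by rewrite /Defs.cumloss !big_ord0 subrr mulr0 expR0.
  by rewrite sumr_const -/#|I| mulVf ?ln1 // pnatr_eq0 -lt0n.
rewrite size_rcons (big_prefix_rcons +%R dflt (fun t h fc => ln (potential_ratio t h fc))) //.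
rewrite potential_rcons mulrA lnM ?IH // posrE ?potential_ratio_gt0 //.
by rewrite mulr_gt0 ?invr_gt0 ?ltr0n // (lt_le_trans ltr01 (potential_ge1 h)).
Qed.

Lemma Z_le_ln_card T : Z F istar Nt eta advx advb T <= ln #|I|%:R.
Proof.
have card_gt0 : 0 < #|I|%:R :> R by rewrite ltr0n; apply/card_gt0P; exists istar.
rewrite /Z lerNl -[X in X <= _](expect_cst T (- ln #|I|%:R)).
apply: ler_expect => h; rewrite -lnV ?posrE // ler_ln ?posrE ?invr_gt0 //.
  by rewrite ler_peMr ?potential_ge1 // invr_ge0 ltW.
by rewrite mulr_gt0 ?invr_gt0 // (lt_le_trans ltr01 (potential_ge1 h)).
Qed.

Section Horizon.
Variable T : nat.
Hypotheses (Nt_ge2 : forall t, (t < T)%N -> (2 <= Nt t)%N)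
  (b01 : forall t h j, (j < Nt t)%N -> 0 <= advb t h j <= 1).

Lemma expected_regret_le : 0 < eta -> eta <= 3^-1 ->
  expected_regret F istar Nt eta advx advb T
    <= eta^-1 * ln #|I|%:R + 5 * eta * \sum_(t < T) (Nt t)%:R.
Proof.
move=> eta_gt0 eta_le.
have := expect_sum_rounds_le
  (G := fun t h fc => round_regret t h fc + eta^-1 * ln (potential_ratio t h fc))
  (B := fun t => 5 * eta * (Nt t)%:R)
  (fun t h tT => round_bound (Nt_ge2 tT) (@b01 t h) eta_gt0 eta_le).
have -> : expect T (fun h => \sum_(t < T) (round_regret t (take t h) (nth dflt h t)
    + eta^-1 * ln (potential_ratio t (take t h) (nth dflt h t))))
  = expected_regret F istar Nt eta advx advb T - eta^-1 * Z F istar Nt eta advx advb T.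
  rewrite /Z mulrN opprK -expectZ -expectD; apply: eq_expect => h.
  by rewrite big_split /= -mulr_sumr ln_potential size_tuple.
have eta_inv_ge0 : 0 <= eta^-1 by rewrite invr_ge0 ltW.
have := ler_wpM2l eta_inv_ge0 (Z_le_ln_card T).
rewrite -mulr_sumr; lra.
Qed.

Lemma expected_regret_le0 : (#|I| <= 1)%N ->
  expected_regret F istar Nt eta advx advb T <= 0.
Proof.
move=> /fintype_le1P I_single.
apply: le_trans (expect_sum_rounds_le (G := round_regret) (B := fun=> 0) _) _.
  move=> t h tT; apply: le_trans (round_regret_le (Nt_ge2 tT) (@b01 t h)) _.
  by rewrite big1 // => g _; rewrite (I_single istar g) /ctr_err !subrr normr0 addr0 mulr0.
by rewrite big1.
Qed.

End Horizon.

End Game.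

Lemma learning_rate_tuning (R : realType) (L S : R) : 0 < L -> 0 <= S ->
  exists2 eta, 0 < eta <= 3^-1 & eta^-1 * L + 5 * eta * S <= 18 * (L + Num.sqrt (S * L)).
Proof.
move=> L_gt0 S_ge0; have sqrt_ge0 := sqrtr_ge0 (S * L).
have [S_le|S_gt] := leP S (9 * L).
  by exists 3^-1; rewrite ?invrK; lra.
have S_gt0 : 0 < S by lra.
set e := Num.sqrt (L / S).
have e_gt0 : 0 < e by rewrite sqrtr_gt0 divr_gt0.
have L_eq : L = e ^+ 2 * S by rewrite sqr_sqrtr ?divfK ?gt_eqF // ltW // divr_gt0.
exists e.
  have : e ^+ 2 < 9^-1 by rewrite -(ltr_pM2r S_gt0) -L_eq; lra.
  by rewrite andbC e_gt0 /=; nra.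
have -> : Num.sqrt (S * L) = S * e.
  by rewrite L_eq (_ : S * _ = (S * e) ^+ 2) ?sqrtr_sqr ?ger0_norm ?mulr_ge0 ?ltW //; ring.
have -> : e^-1 * L = S * e by rewrite L_eq; field; rewrite gt_eqF.
have : 0 <= S * e by rewrite mulr_ge0 ?ltW.
lra.
Qed.

Theorem corollary2 (R : realType) :
  (forall (X : Type) (I : finType) (F : I -> X -> nat -> R) (istar : I)
     (Nt : nat -> nat) (T : nat) (eta : R)
     (advx : nat -> seq (I * bool) -> X)
     (advb : nat -> seq (I * bool) -> nat -> R),
     injective F ->
     (forall i x j, 0 <= F i x j <= 1) ->
     (forall t, (t < T)%N -> (2 <= Nt t)%N) ->
     (forall t h j, (j < Nt t)%N -> 0 <= advb t h j <= 1) ->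
     0 < eta ->
     Z F istar Nt eta advx advb T <= ln (#|I|%:R))
  /\
  exists C : R, 0 < C /\
    forall (I : finType) (T : nat) (Nt : nat -> nat),
      (forall t, (t < T)%N -> (2 <= Nt t)%N) ->
      exists eta : R, 0 < eta <= 1 /\
        forall (X : Type) (F : I -> X -> nat -> R) (istar : I)
          (advx : nat -> seq (I * bool) -> X)
          (advb : nat -> seq (I * bool) -> nat -> R),
          injective F ->
          (forall i x j, 0 <= F i x j <= 1) ->
          (forall t h j, (j < Nt t)%N -> 0 <= advb t h j <= 1) ->
          expected_regret F istar Nt eta advx advb T
            <= C * (ln (#|I|%:R)
                    + Num.sqrt ((\sum_(t < T) (Nt t)%:R) * ln (#|I|%:R))).
Proof.
split=> [X I F istar Nt T eta advx advb _ F01 _ _ _|]; first exact: Z_le_ln_card.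
exists 18; split=> // I T Nt Nt_ge2.
set L := ln #|I|%:R; set S := \sum_(t < T) _.
have S_ge0 : 0 <= S by apply: sumr_ge0 => t _; apply: ler0n.
have bound_ge0 : 0 <= L -> 0 <= 18 * (L + Num.sqrt (S * L)).
  by move=> L_ge0; rewrite mulr_ge0 ?addr_ge0 ?sqrtr_ge0.
have [I_le1|I_gt1] := leqP #|I| 1.
  exists 3^-1; split=> [|X F istar advx advb _ F01 b01]; first lra.
  apply: le_trans (expected_regret_le0 _ _ _ F01 Nt_ge2 b01 I_le1) (bound_ge0 _).
  by rewrite ln_ge0 // ler1n; apply/card_gt0P; exists istar.
have L_gt0 : 0 < L by rewrite ln_gt0 // ltr1n.
have [eta eta_bd tuned] := learning_rate_tuning L_gt0 S_ge0.
exists eta; split=> [|X F istar advx advb _ F01 b01]; first lra.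
apply: le_trans tuned; case/andP: eta_bd => eta_gt0 eta_le.
exact: expected_regret_le.
Qed.
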